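(* Let $N\ge 2$ be even and let $B_N=K_{N/2,N/2}$ be the complete bipartite graph with two parts of size $N/2$ each, and $K_N$ the complete graph, both on vertex set $\{1,\dots,N\}$. Then \[ \rho(B_N,K_N)>\frac{1}{e-1}\cdot\frac1N \qquad\text{and}\qquad \rho(K_N,B_N)<\frac{e}{e-1}\cdot\frac1N. \]
   Context: Moran Birth-death process on two graphs (neutral case): $G^A$ and $G^B$ are connected undirected simple graphs on the same vertex set $\{1,\dots,N\}$. Every vertex is occupied by exactly one individual, of type $A$ (mutant) or type $B$ (resident). In each discrete time step, one individual is chosen uniformly at random among all $N$ individuals to reproduce; its offspring (of the same type) replaces the individual at a vertex chosen uniformly at random among the neighbors of the parent's vertex, where neighbors are taken in $G^A$ if the parent is of type $A$ and in $G^B$ if the parent is of type $B$. The all-$A$ and all-$B$ states are absorbing. The fixation probability $\rho(G^A,G^B)$ is the probability that the process reaches the all-$A$ state when started from exactly one type-$A$ individual at a uniformly random vertex, all other vertices of type $B$. Here $e$ is Euler's number. *)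

From mathcomp Require Import all_boot all_order all_algebra.
From mathcomp Require Import all_classical all_reals all_analysis.
Set Implicit Arguments. Unset Strict Implicit. Unset Printing Implicit Defensive.
Import Order.TTheory GRing.Theory Num.Theory.
Import numFieldNormedType.Exports.
Local Open Scope ring_scope.

(* Vertex set {1,...,N} is represented by 'I_N = {0,...,N-1}.
   A graph is an adjacency relation on 'I_N.
   A state of the process is the set S of vertices occupied by type A. *)

Definition complete_graph (N : nat) : rel 'I_N := fun i j => i != j.

Definition bipartite_graph (N : nat) : rel 'I_N :=
  fun i j => (i < N./2)%N != (j < N./2)%N.

(* One step of the Moran Birth-death process on (GA, GB), acting on functions
   of the state: (bd_step f) S = E[ f(next state) | current state S ].
   A parent i is chosen with probability 1/N; its offspring replaces a
   uniformly chosen neighbour j of i in GA (if i is of type A, i.e. i \in S)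
   or in GB (if i is of type B). *)
Definition bd_step (R : realType) (N : nat) (GA GB : rel 'I_N)
    (f : {set 'I_N} -> R) (S : {set 'I_N}) : R :=
  \sum_(i : 'I_N)
     let G := if i \in S then GA else GB in
     \sum_(j : 'I_N | G i j)
        (N%:R * #|[set k | G i k]|%:R)^-1 *
          f (if i \in S then j |: S else S :\ j).

(* Probability that the process started in state S is in the all-A state
   (absorbing) at time t, i.e. has fixated by time t. *)
Definition fix_by (R : realType) (N : nat) (GA GB : rel 'I_N) (t : nat)
    (S : {set 'I_N}) : R :=
  iter t (bd_step GA GB) (fun S' : {set 'I_N} => if S' == [set: 'I_N] then 1 else 0) S.

(* Fixation probability rho(GA, GB): start from a single A at a uniformly
   random vertex; probability of ever reaching the all-A state
   (= limit of the nondecreasing sequence fix_by t). *)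
Definition fixation_prob (R : realType) (N : nat) (GA GB : rel 'I_N) : R :=
  limn (fun t : nat => N%:R^-1 * \sum_(v : 'I_N) fix_by R GA GB t [set v]).

Arguments complete_graph N : clear implicits.
Arguments bipartite_graph N : clear implicits.
Arguments fixation_prob R {N} GA GB.

From mathcomp Require Import all_boot all_order all_algebra.
From mathcomp Require Import all_classical all_reals all_analysis.
From mathcomp Require Import ring lra zify.
Set Implicit Arguments. Unset Strict Implicit. Unset Printing Implicit Defensive.
Import numFieldNormedType.Exports.
Import Order.TTheory GRing.Theory Num.Theory.
Local Open Scope ring_scope.

(* The fixation probability [u S] from a state S (the set of mutants; [fixation_from]
   below) is harmonic for one step of the process, with [u set0 = 0] and [u setT = 1].
   Compare u with functions [F #|S|] of the number of mutants: if one step raises F on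
   average, a maximum principle gives [F <= u]; if it lowers F, monotone iteration gives
   [u <= F].  For F the normalised cumulative sums of positive increments [d m], the drift
   at [#|S| = m] has the sign of [d m * up S - d (m-1) * down S].  On K_N both rates equal
   [m (N - m) / (N (N - 1))]; on K_{N/2,N/2} both equal [2 c / N^2], where the edge cut c
   of S is at least [m (N - m) / 2], and [c = N/2] for a single vertex.  So
   [d m = (N/(N-1))^(m-1)] works for [rho(B_N, K_N)] and [d m = ((N-1)/N)^m] for
   [rho(K_N, B_N)], and rho is bounded by [F 1 = d 0 / sum_(m < N) d m]; the sums are
   estimated with [(1 + 1/k)^k <= e] and [(1 - 1/N)^N < 1/e]. *)

Section EdgeCut.
Variables (N : nat) (G : rel 'I_N).
Implicit Types S : {set 'I_N}.

Definition edge_cut S : nat :=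
  (\sum_(i in S) #|[set j | G i j && (j \notin S)]|)%N.

Lemma edge_cutE S : edge_cut S = (\sum_(i in S) \sum_(j in ~: S) G i j)%N.
Proof.
rewrite /edge_cut; apply: eq_bigr => i _; rewrite -sum1_card big_mkcond [RHS]big_mkcond /=.
by apply: eq_bigr => j _; rewrite !inE; case: (G i j); case: (j \in S).
Qed.

Lemma edge_cut_setC S : symmetric G -> edge_cut (~: S) = edge_cut S.
Proof.
move=> Gsym; rewrite !edge_cutE finset.setCK exchange_big.
by apply: eq_bigr => i _; apply: eq_bigr => j _; rewrite Gsym.
Qed.

End EdgeCut.

Section Cumulative.
Variables (R : realType) (N : nat) (d : nat -> R).
Hypotheses (N_gt0 : (0 < N)%N) (d_gt0 : forall m, 0 < d m).

Definition cumul (m : nat) : R := (\sum_(j < m) d j) / \sum_(j < N) d j.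

Lemma sum_pos_gt0 : 0 < \sum_(j < N) d j.
Proof.
rewrite (bigD1 (Ordinal N_gt0)) //= ltr_pwDl ?d_gt0 ?sumr_ge0 // => j _.
exact: ltW.
Qed.

Lemma cumul0 : cumul 0 = 0.
Proof. by rewrite /cumul big_ord0 mul0r. Qed.

Lemma cumulN : cumul N = 1.
Proof. by rewrite /cumul mulfV // gt_eqF // sum_pos_gt0. Qed.

Lemma cumul1 : cumul 1 = d 0 / \sum_(j < N) d j.
Proof. by rewrite /cumul big_ord1. Qed.

Lemma cumulS m : cumul m.+1 - cumul m = d m / \sum_(j < N) d j.
Proof. by rewrite /cumul big_ord_recr /= mulrDl addrAC subrr add0r. Qed.

Lemma cumul_ge0 m : 0 <= cumul m.
Proof.
by rewrite divr_ge0 ?(ltW sum_pos_gt0) ?sumr_ge0 // => j _; exact: ltW.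
Qed.

End Cumulative.

Section BirthDeath.
Variables (R : realType) (N : nat) (GA GB : rel 'I_N).
Hypothesis N_gt0 : (0 < N)%N.
Hypothesis degA_gt0 : forall i, (0 < #|[set k | GA i k]|)%N.
Hypothesis degB_gt0 : forall i, (0 < #|[set k | GB i k]|)%N.

Local Notation step := (@bd_step R N GA GB).
Local Notation fixt := (fix_by R GA GB).
Local Notation allA := [set: 'I_N]%SET.
Local Notation allB := (finset.set0 : {set 'I_N}).
Implicit Types (S T : {set 'I_N}) (f g h : {set 'I_N} -> R).

Definition resident_contact : Prop :=
  forall S, S != allB -> S != allA -> exists i j, [/\ i \notin S, j \in S & GB i j].

Lemma bd_step_const (c : R) S : step (fun=> c) S = c.
Proof.
have NR : (N%:R : R) != 0 by rewrite pnatr_eq0 -lt0n.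
rewrite /bd_step (eq_bigr (fun=> N%:R^-1 * c)) => [|i _ /=].
  by rewrite sumr_const card_ord -mulr_natr; field.
set G := if i \in S then GA else GB.
have dG : (#|[set k | G i k]|%:R : R) != 0.
  by rewrite pnatr_eq0 -lt0n /G; case: (i \in S).
rewrite -big_distrl /= (eq_bigl (fun j => j \in [set k | G i k])); last first.
  by move=> j; rewrite inE.
by rewrite sumr_const -mulr_natr; field; rewrite dG NR.
Qed.

Lemma bd_step_le f g S : (forall T, f T <= g T) -> step f S <= step g S.
Proof.
move=> fg; apply: ler_sum => i _; apply: ler_sum => j _.
by apply: ler_wpM2l; rewrite ?invr_ge0 ?mulr_ge0.
Qed.

Lemma bd_step_ge0 f S : (forall T, 0 <= f T) -> 0 <= step f S.
Proof. by move=> f0; rewrite -(bd_step_const 0 S); apply: bd_step_le. Qed.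

Lemma bd_stepB f g S : step (fun T => f T - g T) S = step f S - step g S.
Proof.
rewrite /bd_step -sumrB; apply: eq_bigr => i _.
by rewrite -sumrB; apply: eq_bigr => j _; rewrite mulrBr.
Qed.

Lemma bd_step_allA f : step f allA = f allA.
Proof.
rewrite -[RHS](bd_step_const (f allA) allA).
by apply: eq_bigr => i _; rewrite inE; apply: eq_bigr => j _; rewrite finset.setUT.
Qed.

Lemma bd_step_allB f : step f allB = f allB.
Proof.
rewrite -[RHS](bd_step_const (f allB) allB).
by apply: eq_bigr => i _; rewrite inE; apply: eq_bigr => j _; rewrite finset.set0D.
Qed.

Lemma bd_step_ge_resident_birth f S i j :
  (forall T, 0 <= f T) -> i \notin S -> GB i j ->
  (N%:R * #|[set k | GB i k]|%:R)^-1 * f (S :\ j) <= step f S.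
Proof.
move=> f0 iS Gij; rewrite /bd_step (bigD1 i) //= (negbTE iS) (bigD1 j) //=.
rewrite -addrA lerDl addr_ge0 ?sumr_ge0 // => [k _|k _].
  by rewrite mulr_ge0 // invr_ge0 mulr_ge0.
by apply: sumr_ge0 => l _; rewrite mulr_ge0 // invr_ge0 mulr_ge0.
Qed.

Lemma allB_neq_allA : allB != allA.
Proof. by apply/eqP => /setP /(_ (Ordinal N_gt0)); rewrite !inE. Qed.

Lemma fix_by_bounds t S : 0 <= fixt t S <= 1.
Proof.
elim: t S => [|t IH] S; first by rewrite /fix_by /=; case: ifP => _; rewrite ?ler01 ?lexx.
apply/andP; split; first by apply: bd_step_ge0 => T; case/andP: (IH T).
by rewrite -(bd_step_const 1 S); apply: bd_step_le => T; case/andP: (IH T).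
Qed.

Lemma fix_by_nondecreasing t S : fixt t S <= fixt t.+1 S.
Proof.
elim: t S => [|t IH] S; last exact: bd_step_le.
have [->|SA] := eqVneq S allA; first by rewrite [X in _ <= X]bd_step_allA.
by rewrite /fix_by /= (negbTE SA); apply: bd_step_ge0 => T; case: ifP.
Qed.

Lemma fix_by_allA t : fixt t allA = 1.
Proof. by elim: t => [|t IH]; rewrite /= ?eqxx // bd_step_allA. Qed.

Lemma fix_by_allB t : fixt t allB = 0.
Proof.
by elim: t => [|t IH]; rewrite /fix_by /= ?(negbTE allB_neq_allA) // bd_step_allB.
Qed.

Definition fixation_from S : R := limn (fun t => fixt t S).

Lemma fix_by_cvg S : ((fun t => fixt t S) @ \oo --> fixation_from S)%classic.
Proof.
apply: nondecreasing_is_cvgn.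
  by apply/nondecreasing_seqP => t; exact: fix_by_nondecreasing.
by exists 1 => _ [t _ <-]; case/andP: (fix_by_bounds t S).
Qed.

Lemma fixation_from_allA : fixation_from allA = 1.
Proof. by rewrite /fixation_from (eq_fun fix_by_allA) lim_cst. Qed.

Lemma fixation_from_allB : fixation_from allB = 0.
Proof. by rewrite /fixation_from (eq_fun fix_by_allB) lim_cst. Qed.

Lemma bd_step_fixation_from S : step fixation_from S = fixation_from S.
Proof.
have step_lim : ((fun t => fixt t.+1 S) @ \oo --> step fixation_from S)%classic.
  apply: cvg_big => // [|i _]; first exact: add_continuous.
  apply: cvg_big => // [|j _]; first exact: add_continuous.
  by apply: cvgMl_tmp; exact: fix_by_cvg.
have shift_lim : ((fun t => fixt t.+1 S) @ \oo --> fixation_from S)%classic.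
  by rewrite (cvg_shiftS (fun t => fixt t S)); exact: fix_by_cvg.
exact: cvg_unique step_lim shift_lim.
Qed.

Lemma fixation_probE :
  fixation_prob R GA GB = N%:R^-1 * \sum_(v : 'I_N) fixation_from [set v].
Proof.
apply/cvg_lim => //; apply: cvgMl_tmp; apply: cvg_big => // [|v _].
  exact: add_continuous.
exact: fix_by_cvg.
Qed.

Lemma bd_step_lt_max g M S i j :
  (forall T, g T <= M) -> i \notin S -> GB i j -> g (S :\ j) < M -> step g S < M.
Proof.
move=> gM iS Gij gSj.
have gap : 0 < step (fun T => M - g T) S.
  apply: lt_le_trans (bd_step_ge_resident_birth (f := fun T => M - g T) _ iS Gij).
    by rewrite mulr_gt0 ?subr_gt0 // invr_gt0 mulr_gt0 // ltr0n.
  by move=> T; rewrite subr_ge0.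
by move: gap; rewrite bd_stepB bd_step_const subr_gt0.
Qed.

Lemma subharmonic_le0 g :
  resident_contact ->
  (forall S, S != allB -> S != allA -> g S <= step g S) ->
  g allB <= 0 -> g allA <= 0 -> forall S, g S <= 0.
Proof.
move=> contact sub gB gA.
(* By induction on #|S|, every state lies strictly below a positive maximum M: a resident
   birth at a mutant j leads to [S :\ j], where g < M, so [g S <= step g S < M]. *)
case: (@arg_maxP _ _ _ allB xpredT g isT) => Smax _ gmax.
suff gSmax : g Smax <= 0 by move=> S; exact: le_trans (gmax S isT) gSmax.
rewrite leNgt; apply/negP => Smax_gt0.
suff lt_max k S : #|S| = k -> g S < g Smax by have := lt_max _ Smax erefl; rewrite ltxx.
elim: k S => [|k IH] S cardS.
  by move/eqP: cardS; rewrite cards_eq0 => /eqP ->; exact: le_lt_trans gB Smax_gt0.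
have [->|SA] := eqVneq S allA; first exact: le_lt_trans gA Smax_gt0.
have SB : S != allB by apply/eqP => S0; move: cardS; rewrite S0 cards0.
have [i [j [iS jS Gij]]] := contact S SB SA.
apply: le_lt_trans (sub S SB SA) _.
apply: bd_step_lt_max iS Gij _ => [T|]; first exact: gmax.
by apply: IH; move: cardS; rewrite (cardsD1 j) jS add1n => -[].
Qed.

Lemma subharmonic_le_fixation_from h :
  resident_contact ->
  (forall S, S != allB -> S != allA -> h S <= step h S) ->
  h allB <= 0 -> h allA <= 1 -> forall S, h S <= fixation_from S.
Proof.
move=> contact sub hB hA S; rewrite -subr_le0; move: S.
apply: subharmonic_le0 => // [S SB SA||].
- by rewrite bd_stepB bd_step_fixation_from lerD2r sub.
- by rewrite fixation_from_allB subr0.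
- by rewrite fixation_from_allA subr_le0.
Qed.

Lemma fixation_from_le_superharmonic h :
  (forall S, S != allB -> S != allA -> step h S <= h S) ->
  (forall S, 0 <= h S) -> 1 <= h allA -> forall S, fixation_from S <= h S.
Proof.
move=> super h_ge0 hA.
have fix_by_le t S : fixt t S <= h S.
  elim: t S => [|t IH] S; first by rewrite /fix_by /=; case: ifP => [/eqP ->|].
  have [->|SB] := eqVneq S allB; first by rewrite fix_by_allB.
  have [->|SA] := eqVneq S allA; first by rewrite fix_by_allA.
  exact: le_trans (bd_step_le S IH) (super S SB SA).
move=> S; apply: limr_le; first exact: cvgP (@fix_by_cvg S).
exact: nearW.
Qed.

Definition up_rate S : R := \sum_(i in S)
  (N%:R * #|[set k | GA i k]|%:R)^-1 * #|[set j | GA i j && (j \notin S)]|%:R.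

Definition down_rate S : R := \sum_(i in ~: S)
  (N%:R * #|[set k | GB i k]|%:R)^-1 * #|[set j | GB i j && (j \in S)]|%:R.

Lemma sum_if_const (P Q : pred 'I_N) (a : R) :
  \sum_(j | P j) (if Q j then a else 0) = a * #|[set j | P j && Q j]|%:R.
Proof.
rewrite -big_mkcondr (eq_bigl (fun j => j \in [set j | P j && Q j])).
  by rewrite sumr_const mulr_natr.
by move=> j; rewrite inE.
Qed.

Lemma bd_step_card (F : nat -> R) S :
  step (fun T => F #|T|) S =
  F #|S| + (F #|S|.+1 - F #|S|) * up_rate S + (F #|S|.-1 - F #|S|) * down_rate S.
Proof.
suff drift : step (fun T => F #|T| - F #|S|) S =
    (F #|S|.+1 - F #|S|) * up_rate S + (F #|S|.-1 - F #|S|) * down_rate S.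
  by rewrite -addrA -drift bd_stepB bd_step_const addrC subrK.
rewrite /bd_step (bigID (mem S)) /= /up_rate /down_rate !mulr_sumr.
congr (_ + _).
  apply: eq_bigr => i iS; rewrite iS mulrCA -sum_if_const mulr_sumr.
  apply: eq_bigr => j _; congr (_ * _).
  by rewrite cardsU1; case: (j \in S); rewrite /= ?subrr ?mulr0 ?add1n.
apply: eq_big => [i|i iS]; first by rewrite inE.
rewrite (negbTE iS) mulrCA -sum_if_const mulr_sumr.
apply: eq_bigr => j _; congr (_ * _).
by rewrite (cardsD1 j S); case: (j \in S); rewrite /= ?add0n ?add1n ?subrr.
Qed.

Lemma up_rate_regular d S : (forall i, #|[set k | GA i k]| = d) ->
  up_rate S = (N%:R * d%:R)^-1 * (edge_cut GA S)%:R.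
Proof.
by move=> degA; rewrite natr_sum mulr_sumr; apply: eq_bigr => i _; rewrite degA.
Qed.

Lemma down_rate_regular d S : symmetric GB -> (forall i, #|[set k | GB i k]| = d) ->
  down_rate S = (N%:R * d%:R)^-1 * (edge_cut GB S)%:R.
Proof.
move=> GBsym degB; rewrite -edge_cut_setC // natr_sum mulr_sumr.
apply: eq_bigr => i _; rewrite degB; congr (_ * _%:R).
by apply: eq_card => j; rewrite !inE negbK.
Qed.

Lemma bd_step_cumul (d : nat -> R) S : (0 < #|S|)%N ->
  step (fun T => cumul N d #|T|) S - cumul N d #|S| =
  (d #|S| * up_rate S - d #|S|.-1 * down_rate S) / \sum_(j < N) d j.
Proof.
rewrite bd_step_card; case: #|S| => // m _ /=.
have down_step : cumul N d m - cumul N d m.+1 = - (d m / \sum_(j < N) d j).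
  by rewrite -(@cumulS R N d m) opprB.
by rewrite (@cumulS R N d m.+1) down_step; ring.
Qed.

Lemma average_const (c : R) : N%:R^-1 * \sum_(v : 'I_N) c = c.
Proof.
have NR : (N%:R : R) != 0 by rewrite pnatr_eq0 -lt0n.
by rewrite sumr_const card_ord -mulr_natr; field.
Qed.

Lemma fixation_prob_ge (c : R) :
  (forall v, c <= fixation_from [set v]) -> c <= fixation_prob R GA GB.
Proof.
move=> c_le; rewrite fixation_probE -[X in X <= _]average_const.
by rewrite ler_wpM2l ?invr_ge0 // ler_sum.
Qed.

Lemma fixation_prob_le (c : R) :
  (forall v, fixation_from [set v] <= c) -> fixation_prob R GA GB <= c.
Proof.
move=> le_c; rewrite fixation_probE -[X in _ <= X]average_const.
by rewrite ler_wpM2l ?invr_ge0 // ler_sum.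
Qed.

Lemma cumul_le_fixation_prob (d : nat -> R) : (forall m, 0 < d m) ->
  resident_contact ->
  (forall S, S != allB -> S != allA -> d #|S|.-1 * down_rate S <= d #|S| * up_rate S) ->
  cumul N d 1 <= fixation_prob R GA GB.
Proof.
move=> d_gt0 contact drift; apply: fixation_prob_ge => v; rewrite -(cards1 v).
apply: (@subharmonic_le_fixation_from (fun T => cumul N d #|T|)) => // [S SB SA||].
- rewrite -subr_ge0 bd_step_cumul ?card_gt0 //.
  by rewrite divr_ge0 ?subr_ge0 ?drift // ltW // sum_pos_gt0.
- by rewrite cards0 cumul0.
- by rewrite cardsT card_ord cumulN.
Qed.

Lemma fixation_prob_le_cumul (d : nat -> R) : (forall m, 0 < d m) ->
  (forall S, S != allB -> S != allA -> d #|S| * up_rate S <= d #|S|.-1 * down_rate S) ->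
  fixation_prob R GA GB <= cumul N d 1.
Proof.
move=> d_gt0 drift; apply: fixation_prob_le => v; rewrite -(cards1 v).
apply: (@fixation_from_le_superharmonic (fun T => cumul N d #|T|)) => [S SB SA|S|].
- rewrite -subr_le0 bd_step_cumul ?card_gt0 //.
  by rewrite pmulr_lle0 ?invr_gt0 ?sum_pos_gt0 // subr_le0 drift.
- exact: cumul_ge0.
- by rewrite cardsT card_ord cumulN.
Qed.

End BirthDeath.

Section Graphs.
Variable N : nat.
Implicit Types S : {set 'I_N}.

Lemma complete_graph_sym : symmetric (complete_graph N).
Proof. by move=> i j; rewrite /complete_graph eq_sym. Qed.

Lemma bipartite_graph_sym : symmetric (bipartite_graph N).
Proof. by move=> i j; rewrite /bipartite_graph eq_sym. Qed.

Lemma card_setC_ord S : #|~: S| = (N - #|S|)%N.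
Proof. by rewrite -[X in (X - _)%N](card_ord N) -(cardsC S) addKn. Qed.

Lemma complete_graph_deg i : #|[set k | complete_graph N i k]| = N.-1.
Proof.
rewrite -[in RHS](card_ord N) -(cardsC1 i); apply: eq_card => k.
by rewrite !inE /complete_graph eq_sym.
Qed.

Lemma edge_cut_complete S : edge_cut (complete_graph N) S = (#|S| * (N - #|S|))%N.
Proof.
rewrite /edge_cut (eq_bigr (fun=> N - #|S|))%N ?sum_nat_const // => i iS.
rewrite -card_setC_ord; apply: eq_card => j; rewrite !inE /complete_graph.
by case: eqP => [<-|//]; rewrite iS.
Qed.

Lemma complete_graph_resident_contact : resident_contact (complete_graph N).
Proof.
move=> S SB SA; have [j jS] := set0Pn _ SB.
have /subsetPn[i _ iS] : ~~ ([set: 'I_N] \subset S) by rewrite finset.subTset.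
by exists i, j; split=> //; rewrite /complete_graph; apply: contraNneq iS => ->.
Qed.

Definition lower_half : {set 'I_N} := [set j : 'I_N | (j < N./2)%N].

Lemma card_lower_half : #|lower_half| = N./2.
Proof.
have le_half : (N./2 <= N)%N by rewrite -{2}(odd_double_half N) -addnn; lia.
rewrite (_ : lower_half = [set widen_ord le_half k | k in 'I_N./2]).
  by rewrite card_imset ?card_ord // => a b /(congr1 val) /= /val_inj.
apply/setP => j; rewrite inE; apply/idP/imsetP => [j_lt|[k _ ->]].
  by exists (Ordinal j_lt) => //; apply: val_inj.
exact: (ltn_ord k).
Qed.

Hypothesis N_even : ~~ odd N.
Local Notation n := N./2.

Lemma N_double : N = (n + n)%N.
Proof. by rewrite addnn -{1}(odd_double_half N) (negbTE N_even). Qed.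

Lemma card_upper_half : #|~: lower_half| = n.
Proof. by rewrite card_setC_ord card_lower_half {1}N_double addnK. Qed.

Lemma bipartite_graph_deg i : #|[set k | bipartite_graph N i k]| = n.
Proof.
case: (boolP (i \in lower_half)) => [i_lo|i_up].
  rewrite -card_upper_half; apply: eq_card => k.
  by move: i_lo; rewrite !inE /bipartite_graph => ->; case: (k < n)%N.
rewrite -card_lower_half; apply: eq_card => k.
by move: i_up; rewrite !inE /bipartite_graph => /negbTE ->; case: (k < n)%N.
Qed.

Lemma edge_cut_bipartite S :
  edge_cut (bipartite_graph N) S =
  (#|S :&: lower_half| * (n - #|S :\: lower_half|)
   + #|S :\: lower_half| * (n - #|S :&: lower_half|))%N.
Proof.
have out_lower i : i \in lower_half ->
    #|[set j | bipartite_graph N i j && (j \notin S)]| = (n - #|S :\: lower_half|)%N.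
  move=> i_lo; rewrite -card_upper_half finset.setDE finset.setIC -cardsD.
  apply: eq_card => j; move: i_lo; rewrite !inE /bipartite_graph => ->.
  by case: (j < n)%N; rewrite ?andbT ?andbF.
have out_upper i : i \notin lower_half ->
    #|[set j | bipartite_graph N i j && (j \notin S)]| = (n - #|S :&: lower_half|)%N.
  move=> i_up; rewrite -card_lower_half finset.setIC -cardsD; apply: eq_card => j.
  move: i_up; rewrite !inE /bipartite_graph => /negbTE ->.
  by case: (j < n)%N; rewrite ?andbT ?andbF.
rewrite /edge_cut (big_setID lower_half) /=.
rewrite (eq_bigr (fun=> n - #|S :\: lower_half|)%N) => [|i]; last first.
  by rewrite finset.in_setI => /andP[_ /out_lower].
rewrite [X in (_ + X)%N](eq_bigr (fun=> n - #|S :&: lower_half|)%N) => [|i]; last first.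
  by rewrite finset.in_setD => /andP[/out_upper].
by rewrite !sum_nat_const.
Qed.

Lemma card_lower_half_le S : (#|S :&: lower_half| <= n)%N.
Proof. by rewrite -card_lower_half subset_leq_card // finset.subsetIr. Qed.

Lemma card_upper_half_le S : (#|S :\: lower_half| <= n)%N.
Proof. by rewrite -card_upper_half subset_leq_card // finset.setDE finset.subsetIr. Qed.

Lemma edge_cut_bipartite_ge S :
  (#|S| * (N - #|S|) <= 2 * edge_cut (bipartite_graph N) S)%N.
Proof.
have := N_double; have := card_lower_half_le S; have := card_upper_half_le S.
rewrite edge_cut_bipartite -(cardsID lower_half S).
move: #|_ :&: _| #|_ :\: _| => x y.
(* [2 * cut - m (N - m) = (x - y)^2] *)
have [/subnK <-|/ltnW/subnK <-] := leqP x y; move: (_ - _)%N => k; nia.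
Qed.

Lemma edge_cut_bipartite1 S : #|S| = 1%N -> edge_cut (bipartite_graph N) S = n.
Proof.
have := card_lower_half_le S; have := card_upper_half_le S.
rewrite edge_cut_bipartite -(cardsID lower_half S).
move: #|_ :&: _| #|_ :\: _| => x y; nia.
Qed.

End Graphs.

Section ExpBounds.
Variable R : realType.

Lemma expR1_gt2 : 2 < expR 1 :> R.
Proof. by have := @expR_gt1Dx R 1 (oner_neq0 _); lra. Qed.

Lemma pow_one_add_inv_le k : (0 < k)%N -> (1 + k%:R^-1) ^+ k <= expR 1 :> R.
Proof.
move=> k_gt0; have kR : k%:R != 0 :> R by rewrite pnatr_eq0 -lt0n.
by rewrite -[X in expR X](mulfV kR) expRM_natl lerXn2r ?nnegrE ?expR_ge0 ?expR_ge1Dx.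
Qed.

Lemma pow_one_sub_inv_lt k : (0 < k)%N -> (1 - k%:R^-1) ^+ k < (expR 1)^-1 :> R.
Proof.
move=> k_gt0; have kR : k%:R != 0 :> R by rewrite pnatr_eq0 -lt0n.
rewrite -expRN -[X in expR (- X)](mulfV kR) -mulrN expRM_natl.
rewrite ltrXn2r ?nnegrE ?expR_ge0 ?expR_gt1Dx ?oppr_eq0 ?invr_eq0 -?lt0n //.
by rewrite subr_ge0 invf_le1 ?ler1n ?ltr0n.
Qed.

Lemma sum_pow_pred_lt N : (2 <= N)%N ->
  \sum_(j < N) (N%:R / N.-1%:R) ^+ j.-1 < (expR 1 - 1) * N%:R :> R.
Proof.
case: N => // k; rewrite ltnS => k_gt0 /=.
have kR : k%:R != 0 :> R by rewrite pnatr_eq0 -lt0n.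
have gamma_E : k.+1%:R / k%:R = 1 + k%:R^-1 :> R.
  by rewrite -addn1 natrD mulrDl mulfV // mul1r.
have geom : \sum_(j < k) (1 + k%:R^-1) ^+ j = k%:R * ((1 + k%:R^-1) ^+ k - 1) :> R.
  by rewrite subrX1 addrAC subrr add0r mulrA mulfV // mul1r.
rewrite big_ord_recl /= gamma_E geom -addn1 natrD.
have := pow_one_add_inv_le k_gt0; have := expR1_gt2; have : 1 <= k%:R :> R by rewrite ler1n.
nra.
Qed.

Lemma sum_pow_gt N : (0 < N)%N ->
  (expR 1 - 1) / expR 1 * N%:R < \sum_(j < N) (N.-1%:R / N%:R) ^+ j :> R.
Proof.
move=> N_gt0; have NR : N%:R != 0 :> R by rewrite pnatr_eq0 -lt0n.
have e_gt0 : expR 1 != 0 :> R by rewrite gt_eqF ?expR_gt0.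
have beta_E : N.-1%:R / N%:R = 1 - N%:R^-1 :> R.
  by rewrite -{2 3}(prednK N_gt0) -addn1 natrD; field; rewrite natr1 prednK.
have geom : \sum_(j < N) (1 - N%:R^-1) ^+ j = N%:R * (1 - (1 - N%:R^-1) ^+ N) :> R.
  by rewrite -[RHS]opprK -mulrN opprB subrX1; field.
rewrite beta_E geom mulrC ltr_pM2l ?ltr0n //.
rewrite (_ : (expR 1 - 1) / expR 1 = 1 - (expR 1)^-1); last by field.
by rewrite ltrD2l ltrN2 pow_one_sub_inv_lt.
Qed.

End ExpBounds.

Section BipartiteVersusComplete.
Variables (R : realType) (N : nat).
Hypotheses (N_ge2 : (2 <= N)%N) (N_even : ~~ odd N).
Implicit Types S : {set 'I_N}.

Local Notation n := N./2.
Local Notation KN := (complete_graph N).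
Local Notation BN := (bipartite_graph N).

Let N_gt0 : (0 < N)%N. Proof. lia. Qed.
Let NR : N%:R != 0 :> R. Proof. by rewrite pnatr_eq0 -lt0n. Qed.
Let N1R : N.-1%:R != 0 :> R. Proof. by rewrite pnatr_eq0 -lt0n; lia. Qed.
Let nR : n%:R != 0 :> R.
Proof. by rewrite pnatr_eq0 -lt0n; have := N_double N_even; lia. Qed.
Let e_gt1 : 1 < expR 1 :> R. Proof. by rewrite (lt_trans _ (expR1_gt2 R)) ?ltr1n. Qed.
Let N_2n : N%:R = 2 * n%:R :> R. Proof. by rewrite {1}(N_double N_even) natrD; ring. Qed.

Let degK_gt0 i : (0 < #|[set k | KN i k]|)%N.
Proof. by rewrite complete_graph_deg; lia. Qed.
Let degB_gt0 i : (0 < #|[set k | BN i k]|)%N.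
Proof. by rewrite bipartite_graph_deg //; have := N_double N_even; lia. Qed.

Lemma up_rate_complete S :
  up_rate R KN S = (N%:R * N.-1%:R)^-1 * (#|S| * (N - #|S|))%:R.
Proof. by rewrite (up_rate_regular R S (@complete_graph_deg N)) edge_cut_complete. Qed.

Lemma down_rate_complete S :
  down_rate R KN S = (N%:R * N.-1%:R)^-1 * (#|S| * (N - #|S|))%:R.
Proof.
rewrite (down_rate_regular R S (@complete_graph_sym N) (@complete_graph_deg N)).
by rewrite edge_cut_complete.
Qed.

Lemma up_rate_bipartite S : up_rate R BN S = (N%:R * n%:R)^-1 * (edge_cut BN S)%:R.
Proof. exact: (up_rate_regular R S (bipartite_graph_deg N_even)). Qed.

Lemma down_rate_bipartite S : down_rate R BN S = (N%:R * n%:R)^-1 * (edge_cut BN S)%:R.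
Proof.
exact: (down_rate_regular R S (@bipartite_graph_sym N) (bipartite_graph_deg N_even)).
Qed.

Definition gamma : R := N%:R / N.-1%:R.
Definition beta : R := N.-1%:R / N%:R.

Lemma bipartite_complete_drift S : (0 < #|S|)%N ->
  gamma ^+ #|S|.-2 * down_rate R KN S <= gamma ^+ #|S|.-1 * up_rate R BN S.
Proof.
move=> S_gt0; rewrite down_rate_complete up_rate_bipartite.
have cut_ge := edge_cut_bipartite_ge N_even S.
case cardS: #|S| S_gt0 cut_ge => [//|[|k]] _ cut_ge /=.
  rewrite (edge_cut_bipartite1 N_even cardS) !expr0 !mul1r mul1n subn1.
  by rewrite !invfM -!mulrA !mulVf.
rewrite exprSr -[X in _ <= X]mulrA ler_wpM2l ?exprn_ge0 ?divr_ge0 //.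
rewrite (_ : gamma * _ = (N%:R * N.-1%:R)^-1 * (2 * edge_cut BN S)%N%:R); last first.
  by rewrite /gamma natrM N_2n; field; rewrite N1R nR.
by rewrite ler_wpM2l ?invr_ge0 ?mulr_ge0 // ler_nat.
Qed.

Lemma complete_bipartite_drift S : (0 < #|S|)%N ->
  beta ^+ #|S| * up_rate R KN S <= beta ^+ #|S|.-1 * down_rate R BN S.
Proof.
move=> S_gt0; rewrite up_rate_complete down_rate_bipartite.
have cut_ge := edge_cut_bipartite_ge N_even S.
case: #|S| S_gt0 cut_ge => // k _ cut_ge /=.
rewrite exprSr -[X in X <= _]mulrA ler_wpM2l ?exprn_ge0 ?divr_ge0 //.
rewrite (_ : beta * _ = (N%:R * n%:R)^-1 * ((k.+1 * (N - k.+1))%N%:R / 2)); last first.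
  by rewrite /beta N_2n; field; rewrite N1R nR.
rewrite ler_wpM2l ?invr_ge0 ?mulr_ge0 //.
by move: cut_ge; rewrite -(ler_nat R) natrM; lra.
Qed.

Lemma fixation_prob_bipartite_complete :
  (expR 1 - 1)^-1 * N%:R^-1 < fixation_prob R BN KN.
Proof.
have gamma_gt0 : 0 < gamma by rewrite divr_gt0 // ltr0n; lia.
have d_gt0 m : 0 < gamma ^+ m.-1 by rewrite exprn_gt0.
apply: lt_le_trans (cumul_le_fixation_prob N_gt0 degB_gt0 degK_gt0 d_gt0
  (@complete_graph_resident_contact N) _) => [|S SB _]; last first.
  by apply: bipartite_complete_drift; rewrite card_gt0.
rewrite cumul1 expr0 mul1r -invfM ltf_pV2 ?posrE ?(sum_pos_gt0 N_gt0 d_gt0) //.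
  exact: (sum_pow_pred_lt R N_ge2).
by rewrite mulr_gt0 ?ltr0n // subr_gt0.
Qed.

Lemma fixation_prob_complete_bipartite :
  fixation_prob R KN BN < expR 1 / (expR 1 - 1) * N%:R^-1.
Proof.
have beta_gt0 : 0 < beta by rewrite divr_gt0 // ltr0n; lia.
have d_gt0 m : 0 < beta ^+ m by rewrite exprn_gt0.
apply: le_lt_trans (fixation_prob_le_cumul N_gt0 degK_gt0 degB_gt0 d_gt0 _) _ => [S SB _|].
  by apply: complete_bipartite_drift; rewrite card_gt0.
rewrite cumul1 expr0 div1r -[_ / (_ - 1)]invf_div -invfM.
rewrite ltf_pV2 ?posrE ?(sum_pos_gt0 N_gt0 d_gt0) //.
  exact: (sum_pow_gt R N_gt0).
by rewrite mulr_gt0 ?ltr0n // divr_gt0 ?expR_gt0 // subr_gt0.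
Qed.

End BipartiteVersusComplete.

Theorem theorem2 (R : realType) (N : nat) (hN : (2 <= N)%N) (hev : ~~ odd N) :
  (expR 1 - 1)^-1 * N%:R^-1 <
    fixation_prob R (bipartite_graph N) (complete_graph N)
  /\
  fixation_prob R (complete_graph N) (bipartite_graph N) <
    expR 1 / (expR 1 - 1) * N%:R^-1.
Proof.
split; [exact: fixation_prob_bipartite_complete | exact: fixation_prob_complete_bipartite].
Qed.
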